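(* Let $n\ge4$ and consider $n$ agents with private types $t_i\in[0,\infty)$ and valuations $v_i(t_i,S)=|S|\cdot t_i$ for winning sets $S\ni i$ (and $0$ if $i\notin S$), and suppose the seller incurs a cost of $n$ for each copy of the good sold, so the seller's profit from winning set $S$ with prices $(p_i)_{i\in S}$ is $\sum_{i\in S}p_i-n|S|$. Then for every constant $L\ge1$ there is no universally truthful mechanism whose expected profit is at least $\frac1L\mathcal{F}^{(3)}_{\mathrm{cost}}(t)$ for every $t\in[0,\infty)^n$, where $\mathcal{F}^{(3)}_{\mathrm{cost}}(t)=\max\{(c-n)|S| : c\ge0,\ S\subseteq[n],\ |S|\ge3,\ v_i(t_i,S)\ge c\ \forall i\in S\}$. In particular, with a positive per-copy cost the competitive ratio can be unbounded.
   Context: A deterministic mechanism maps reported types to a winning set $S$ and prices $p_i$ for $i\in S$ (losers pay $0$); agent utility is $v_i(t_i,S)-p_i$ if $i\in S$, else $0$. It is truthful if reporting the true type maximizes every agent's utility for all fixed reports of the others, and individually rational if truthful agents get nonnegative utility. A universally truthful mechanism is a probability distribution over deterministic truthful, individually rational mechanisms. *)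

From HB Require Import structures.
From mathcomp Require Import all_boot all_order all_algebra.
From mathcomp Require Import all_classical all_reals all_analysis.
Set Implicit Arguments. Unset Strict Implicit. Unset Printing Implicit Defensive.
Import Order.TTheory GRing.Theory Num.Theory.
Local Open Scope ring_scope.
Local Open Scope classical_set_scope.

(* A deterministic mechanism for n agents: maps a reported type profile
   to a winning set S and prices p_i (only prices of winners matter;
   losers pay 0). *)
Record mechanism (n : nat) (R : Type) := Mechanism {
  alloc : ('I_n -> R) -> {set 'I_n};
  price : ('I_n -> R) -> 'I_n -> R }.

Section Defs.
Variables (R : realType) (n : nat).

Definition valuation (i : 'I_n) (ti : R) (S : {set 'I_n}) : R :=
  if i \in S then #|S|%:R * ti else 0.

Definition utility (M : mechanism n R) (i : 'I_n) (ti : R) (r : 'I_n -> R) : R :=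
  if i \in alloc M r then valuation i ti (alloc M r) - price M r i else 0.

Definition update (t : 'I_n -> R) (i : 'I_n) (x : R) : 'I_n -> R :=
  fun j => if j == i then x else t j.

Definition nonneg_profile (t : 'I_n -> R) := forall i, 0 <= t i.

Definition truthful (M : mechanism n R) : Prop :=
  forall t, nonneg_profile t -> forall (i : 'I_n) (x : R), 0 <= x ->
    utility M i (t i) (update t i x) <= utility M i (t i) t.

Definition indiv_rational (M : mechanism n R) : Prop :=
  forall t, nonneg_profile t -> forall i, 0 <= utility M i (t i) t.

Definition profit (M : mechanism n R) (t : 'I_n -> R) : R :=
  \sum_(i in alloc M t) price M t i - n%:R * #|alloc M t|%:R.

Definition Fcost3 (t : 'I_n -> R) : \bar R :=
  ereal_sup [set x : \bar R | exists (c : R) (S : {set 'I_n}),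
    [/\ 0 <= c, (3 <= #|S|)%N,
        (forall i, i \in S -> c <= valuation i (t i) S) &
        x = ((c - n%:R) * #|S|%:R)%:E]].

End Defs.

(* Test the mechanisms on the constant profiles [gap_profile j], where every
   type equals [1 + gap j] with [gap j = 2^-j / n].  If fewer than [n] agents
   win, individual rationality bounds each price by [|S| (1 + 1/n)], so the
   profit is nonpositive.  If everybody wins at index [m], weak monotonicity
   keeps everybody winning at all larger profiles, and truthfulness then caps
   every price at an index [j <= m] by [n (1 + gap m)], so the profit at [j] is
   at most [n^2 gap m = n 2^-m].  Hence every deterministic truthful, IR
   mechanism satisfies [sum_(j < N) 2^j max(profit_j, 0) <= 2n].  On the other
   hand [F^(3)_cost] at index [j] is at least [n 2^-j], so an
   [L]-approximation makes each of these [N] weighted terms at least [n / L]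
   in expectation, which is impossible once [N > 2L]. *)

From HB Require Import structures.
From mathcomp Require Import all_boot all_order all_algebra.
From mathcomp Require Import all_classical all_reals all_analysis.
From mathcomp Require Import measurable_realfun ring lra.
Set Implicit Arguments. Unset Strict Implicit. Unset Printing Implicit Defensive.
Import Order.TTheory GRing.Theory Num.Theory.
Local Open Scope ring_scope.
Local Open Scope classical_set_scope.

Section Profiles.
Variables (R : realType) (n : nat).
Implicit Types (t : 'I_n -> R) (i : 'I_n) (x y : R).

Lemma update_eq t i x : update t i x i = x.
Proof. by rewrite /update eqxx. Qed.

Lemma update_id t i : update t i (t i) = t.
Proof. by apply/funext => j; rewrite /update; case: eqP => // ->. Qed.

Lemma update_update t i x y : update (update t i x) i y = update t i y.
Proof. by apply/funext => j; rewrite /update; case: eqP. Qed.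

Lemma nonneg_update t i x :
  nonneg_profile t -> 0 <= x -> nonneg_profile (update t i x).
Proof. by move=> t0 x0 j; rewrite /update; case: eqP. Qed.

End Profiles.

Section Truthful.
Variables (R : realType) (n : nat) (M : mechanism n R).
Implicit Types (t r : 'I_n -> R) (i : 'I_n) (x y : R).

Lemma utility_diff i x y r :
  utility M i y r - utility M i x r = valuation i (y - x) (alloc M r).
Proof.
rewrite /utility /valuation; case: (i \in alloc M r); last by rewrite subr0.
ring.
Qed.

Lemma utility_full i x r : alloc M r = [set: 'I_n]%SET ->
  utility M i x r = n%:R * x - price M r i.
Proof. by move=> full; rewrite /utility /valuation full inE cardsT card_ord. Qed.

Hypotheses (truthfulM : truthful M) (irM : indiv_rational M).

(* Weak monotonicity: add the truthfulness constraints at [t] and at [update t i y]. *)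
Lemma weak_monotone t i y : nonneg_profile t -> 0 <= y ->
  valuation i (y - t i) (alloc M t) <= valuation i (y - t i) (alloc M (update t i y)).
Proof.
move=> t0 y0; have t'0 := nonneg_update i t0 y0.
have := truthfulM t0 i y0; have := truthfulM t'0 i (t0 i).
rewrite update_update update_id update_eq -!utility_diff; lra.
Qed.

Lemma alloc_full_update t i y : nonneg_profile t -> t i <= y ->
  alloc M t = [set: 'I_n]%SET -> alloc M (update t i y) = [set: 'I_n]%SET.
Proof.
move=> t0 le_ty full; have [<-|ne] := eqVneq (t i) y; first by rewrite update_id.
have dy_gt0 : 0 < y - t i by rewrite subr_gt0 lt_neqAle ne.
have := weak_monotone i t0 (le_trans (t0 i) le_ty).
rewrite {1}/valuation full inE cardsT card_ord /valuation.
case: ifP => [_|_]; last by rewrite leNgt mulr_gt0 ?ltr0n ?(leq_ltn_trans _ (ltn_ord i)).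
rewrite ler_pM2r // ler_nat => le_n_card.
by apply/eqP; rewrite eqEcard finset.subsetT cardsT card_ord.
Qed.

Lemma alloc_full_mono t t' : nonneg_profile t -> (forall i, t i <= t' i) ->
  alloc M t = [set: 'I_n]%SET -> alloc M t' = [set: 'I_n]%SET.
Proof.
move=> t0 le_tt' full.
pose mix (s : seq 'I_n) i := if i \in s then t' i else t i.
have mix0 s : nonneg_profile (mix s).
  by move=> i; rewrite /mix; case: ifP => _ //; exact: le_trans (t0 i) (le_tt' i).
have mixP s : alloc M (mix s) = [set: 'I_n]%SET.
  elim: s => [|x s IH]; first by have -> : mix [::] = t by apply/funext.
  have -> : mix (x :: s) = update (mix s) x (t' x).
    by apply/funext => j; rewrite /mix /update inE; case: eqP => [->|].
  apply: alloc_full_update => //; rewrite /mix; case: ifP => // _; exact: le_tt'.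
have := mixP (enum 'I_n); congr (alloc M _ = _).
by apply/funext => i; rewrite /mix mem_enum.
Qed.

Lemma price_le_full t i x : nonneg_profile t -> 0 <= x ->
  alloc M t = [set: 'I_n]%SET -> alloc M (update t i x) = [set: 'I_n]%SET ->
  price M t i <= n%:R * x.
Proof.
move=> t0 x0 full full'.
have := truthfulM t0 i x0; have := irM (nonneg_update i t0 x0) i.
by rewrite !utility_full // update_eq; lra.
Qed.

Lemma profit_le_card t b : nonneg_profile t -> (forall i, t i <= b) ->
  profit M t <= #|alloc M t|%:R * (#|alloc M t|%:R * b - n%:R).
Proof.
move=> t0 le_tb; set k := #|alloc M t|%:R.
have price_le i : i \in alloc M t -> price M t i <= k * b.
  move=> win; have := irM t0 i; rewrite /utility /valuation win.
  have : k * t i <= k * b by rewrite ler_wpM2l ?ler0n.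
  lra.
rewrite /profit mulrBr; apply: lerB; last by rewrite mulrC.
by apply: le_trans (ler_sum _ price_le) _; rewrite sumr_const -mulr_natl.
Qed.

Lemma profit_le0_not_full t : (forall i, 0 <= t i <= 1 + n%:R^-1) ->
  alloc M t != [set: 'I_n]%SET -> profit M t <= 0.
Proof.
move=> t_bound not_full.
have t0 : nonneg_profile t by move=> i; case/andP: (t_bound i).
have le_tb i : t i <= 1 + n%:R^-1 by case/andP: (t_bound i).
have lt_card_n : (#|alloc M t| < n)%N.
  rewrite ltn_neqAle -[in X in (_ <= X)%N](card_ord n) max_card andbT.
  apply: contra not_full => /eqP card_n.
  by rewrite eqEcard finset.subsetT cardsT card_ord card_n leqnn.
apply: le_trans (profit_le_card t0 le_tb) _.
apply: mulr_ge0_le0 => //.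
have n_gt0 : 0 < n%:R :> R by rewrite ltr0n (leq_ltn_trans _ lt_card_n).
have : #|alloc M t|%:R * n%:R^-1 <= 1 :> R.
  by rewrite ler_pdivrMr // mul1r ler_nat ltnW.
have : #|alloc M t|%:R + 1 <= n%:R :> R by rewrite natr1 ler_nat.
lra.
Qed.

End Truthful.

Section Gap.
Variables (R : realType) (n : nat).

Definition gap (j : nat) : R := (2%:R ^+ j * n%:R)^-1.

Definition gap_profile (j : nat) : 'I_n -> R := fun=> 1 + gap j.

Hypothesis n_gt0 : (0 < n)%N.

Let nR_gt0 : 0 < n%:R :> R. Proof. by rewrite ltr0n. Qed.

Let exp2_gt0 j : 0 < 2%:R ^+ j :> R. Proof. by rewrite exprn_gt0 ?ltr0n. Qed.

Lemma gap_gt0 j : 0 < gap j.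
Proof. by rewrite invr_gt0 mulr_gt0. Qed.

Lemma le_gap j m : (j <= m)%N -> gap m <= gap j.
Proof.
move=> le_jm; rewrite lef_pV2 ?posrE ?mulr_gt0 // ler_pM2r //.
by rewrite ler_weXn2l // ler1n.
Qed.

Lemma exp2_mul_gap j : 2%:R ^+ j * (n%:R * n%:R * gap j) = n%:R.
Proof. by rewrite /gap; field; rewrite !gt_eqF. Qed.

Lemma gap_profile_bound j i : 0 <= gap_profile j i <= 1 + n%:R^-1.
Proof.
have := le_gap (leq0n j); rewrite /gap_profile /gap expr0 mul1r.
have := gap_gt0 j; rewrite /gap => *; apply/andP; split; lra.
Qed.

Lemma gap_profile_nonneg j : nonneg_profile (gap_profile j).
Proof. by move=> i; case/andP: (gap_profile_bound j i). Qed.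

Variable M : mechanism n R.
Hypotheses (truthfulM : truthful M) (irM : indiv_rational M).

Lemma profit_gap_full j m : (j <= m)%N ->
  alloc M (gap_profile j) = [set: 'I_n]%SET ->
  alloc M (gap_profile m) = [set: 'I_n]%SET ->
  profit M (gap_profile j) <= n%:R * n%:R * gap m.
Proof.
move=> le_jm full_j full_m.
have price_le i : price M (gap_profile j) i <= n%:R * (1 + gap m).
  apply: price_le_full => //; first exact: gap_profile_nonneg.
    by rewrite addr_ge0 // ltW // gap_gt0.
  apply: alloc_full_mono (gap_profile_nonneg m) _ full_m => //.
  by move=> k; rewrite /update /gap_profile; case: eqP => // _; rewrite lerD2l le_gap.
rewrite /profit full_j cardsT card_ord.
apply: le_trans (lerB (ler_sum _ (fun i _ => price_le i)) (lexx _)) _.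
by rewrite sumr_const cardsT card_ord -mulr_natr; lra.
Qed.

Lemma pos_profit_gap_le j m : (j <= m)%N ->
  alloc M (gap_profile m) = [set: 'I_n]%SET ->
  Num.max (profit M (gap_profile j)) 0 <= n%:R * n%:R * gap m.
Proof.
move=> le_jm full_m; have bound_ge0 : 0 <= n%:R * n%:R * gap m.
  by rewrite !mulr_ge0 // ltW // gap_gt0.
rewrite ge_max bound_ge0 andbT.
have [full_j|not_full_j] := eqVneq (alloc M (gap_profile j)) [set: 'I_n]%SET.
  exact: profit_gap_full.
exact: le_trans (profit_le0_not_full irM (gap_profile_bound j) not_full_j) _.
Qed.

(* Induct on [N]: if everybody wins at the last index [m], that index bounds
   all earlier terms and [sum_(j <= m) 2^j <= 2^(m+1)]; otherwise the last
   term vanishes. *)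
Lemma weighted_profit_sum_le N :
  \sum_(j < N) 2%:R ^+ j * Num.max (profit M (gap_profile j)) 0 <= 2 * n%:R.
Proof.
elim: N => [|m IH]; first by rewrite big_ord0 mulr_ge0 ?ler0n.
have [full_m|not_full_m] := eqVneq (alloc M (gap_profile m)) [set: 'I_n]%SET.
  apply: le_trans (ler_sum _ (fun (j : 'I_m.+1) _ =>
    ler_wpM2l (ltW (exp2_gt0 j)) (pos_profit_gap_le (ltnSE (ltn_ord j)) full_m))) _.
  have sum_exp2 : \sum_(j < m.+1) 2%:R ^+ j = 2%:R ^+ m.+1 - 1 :> R.
    by rewrite subrX1 [2%:R - 1](_ : _ = 1 :> R) ?mul1r //; lra.
  rewrite -mulr_suml sum_exp2 mulrBl mul1r exprS -[2 * _ * _]mulrA exp2_mul_gap gerBl.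
  by rewrite !mulr_ge0 // ltW // gap_gt0.
rewrite big_ord_recr /= [Num.max _ 0](max_idPr _) ?mulr0 ?addr0 //.
by apply: (profit_le0_not_full irM) not_full_m => i; exact: gap_profile_bound.
Qed.

End Gap.

Arguments gap : clear implicits.
Arguments gap_profile : clear implicits.

Lemma Fcost3_gap_profile (R : realType) (n j : nat) : (3 <= n)%N ->
  ((n%:R * n%:R * gap R n j)%:E <= Fcost3 (gap_profile R n j))%E.
Proof.
move=> n_ge3; have n_gt0 : (0 < n)%N by apply: leq_trans n_ge3.
apply: ereal_sup_ubound; exists (n%:R * (1 + gap R n j)), [set: 'I_n]%SET.
rewrite cardsT card_ord; split => //.
- by rewrite mulr_ge0 // addr_ge0 // ltW // gap_gt0.
- by move=> i _; rewrite /valuation inE cardsT card_ord.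
- by congr (_%:E); ring.
Qed.

Lemma integral_le_integral_max0 d (T : measurableType d) (R : realType)
    (mu : {measure set T -> \bar R}) (D : set T) (f : T -> R) :
  (\int[mu]_(x in D) (f x)%:E <= \int[mu]_(x in D) (Num.max (f x) 0)%:E)%E.
Proof.
have -> : (\int[mu]_(x in D) (Num.max (f x) 0)%:E
          = \int[mu]_(x in D) (fun x => (f x)%:E)^\+ x)%E.
  by apply: eq_integral => x _; rewrite funeposE EFin_max.
by rewrite integralE -[X in (_ <= X)%E]sube0 leeB // integral_ge0.
Qed.

Section Randomized.
Variables (R : realType) (n : nat) (d : measure_display) (Omega : measurableType d).
Variables (P : probability Omega R) (M : Omega -> mechanism n R).
Hypotheses (n_ge3 : (3 <= n)%N)
  (M_truthful_ir : forall w, truthful (M w) /\ indiv_rational (M w))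
  (M_measurable : forall t, measurable_fun setT (fun w => profit (M w) t)).

Let n_gt0 : (0 < n)%N. Proof. exact: leq_trans n_ge3. Qed.

Let pos_profit (j : nat) (w : Omega) : R :=
  Num.max (profit (M w) (gap_profile R n j)) 0.

Let pos_profit_ge0 j w : (0 <= (pos_profit j w)%:E)%E.
Proof. by rewrite lee_fin le_max lexx orbT. Qed.

Let pos_profit_measurable j : measurable_fun setT (fun w => (pos_profit j w)%:E).
Proof. exact/measurable_EFinP/measurable_maxr. Qed.

Lemma expected_pos_profit_ge (L : R) j : 0 < L ->
  (forall t, nonneg_profile t ->
    ((L^-1)%:E * Fcost3 t <= \int[P]_(w in setT) (profit (M w) t)%:E)%E) ->
  ((n%:R / L)%:E <= (2%:R ^+ j)%:E * \int[P]_(w in setT) (pos_profit j w)%:E)%E.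
Proof.
move=> L_gt0 approx.
have -> : n%:R / L = 2%:R ^+ j * (L^-1 * (n%:R * n%:R * gap R n j)).
  by rewrite mulrCA exp2_mul_gap // mulrC.
rewrite EFinM lee_pmul2l ?lte_fin ?exprn_gt0 //.
apply: le_trans (integral_le_integral_max0 _ _ _).
apply: le_trans (approx _ (gap_profile_nonneg R n_gt0 j)).
rewrite EFinM lee_wpmul2l ?lee_fin ?invr_ge0 ?(ltW L_gt0) //; exact: Fcost3_gap_profile.
Qed.

Lemma expected_pos_profit_sum_le N :
  (\sum_(j < N) (2%:R ^+ j)%:E * \int[P]_(w in setT) (pos_profit j w)%:E
     <= (2 * n%:R)%:E)%E.
Proof.
under eq_bigr do rewrite -ge0_integralZl_EFin ?exprn_ge0 //.
rewrite -ge0_integral_sum //; last 2 first.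
- by move=> j; apply: emeasurable_funM.
- by move=> j w _; rewrite mule_ge0 // lee_fin exprn_ge0.
have -> : ((2 * n%:R)%:E = \int[P]_(w in setT) (cst (2 * n%:R)%:E) w)%E.
  by rewrite integral_cst // [X in (_ * X)%E]probability_setT mule1.
apply: ge0_le_integral => //.
- by move=> w _; rewrite sume_ge0 // => j _; rewrite mule_ge0 // lee_fin exprn_ge0.
- by apply: emeasurable_sum => j; apply: emeasurable_funM.
- move=> w _; rewrite sumEFin lee_fin.
  have [truthful_w ir_w] := M_truthful_ir w.
  exact: weighted_profit_sum_le.
Qed.

End Randomized.

Theorem claim2 (R : realType) (n : nat) (hn : (4 <= n)%N) (L : R) (hL : 1 <= L)
  (d : measure_display) (Omega : measurableType d) (P : probability Omega R)
  (M : Omega -> mechanism n R) :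
  (forall w, truthful (M w) /\ indiv_rational (M w)) ->
  (forall t : 'I_n -> R, measurable_fun setT (fun w => profit (M w) t)) ->
  ~ (forall t : 'I_n -> R, nonneg_profile t ->
       ((L^-1)%:E * Fcost3 t <= \int[P]_(w in setT) (profit (M w) t)%:E)%E).
Proof.
move=> M_truthful_ir M_measurable approx.
have n_ge3 : (3 <= n)%N by apply: ltnW.
have L_gt0 : 0 < L by apply: lt_le_trans hL.
pose N := (Num.truncn (2 * L)).+1.
have : (\sum_(j < N) (n%:R / L)%:E <= (2 * n%:R)%:E)%E.
  apply: le_trans (expected_pos_profit_sum_le P n_ge3 M_truthful_ir M_measurable N).
  by apply: lee_sum => j _; exact: expected_pos_profit_ge.
rewrite sumEFin sumr_const card_ord lee_fin -[_ *+ N]mulr_natr mulrAC.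
rewrite ler_pdivrMr // => le_nN.
have n_gt0 : 0 < n%:R :> R by rewrite ltr0n (leq_trans _ n_ge3).
have : 2 * L < N%:R := truncnS_gt (2 * L).
nra.
Qed.
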